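(* Let $H$ be a Hopf algebra over $\mathbb{C}$ with antipode $S$ and $A$ a left $H$-module algebra. On the Kadison bialgebroid $(A\otimes A^{op})\bowtie H$ (underlying space $A\otimes A\otimes H$) with product $(a\otimes b\otimes h)(a'\otimes b'\otimes h')=a(h_{(1)}\triangleright a')\otimes b'(S(h'_{(2)})\triangleright b)\otimes h_{(2)}h'_{(1)}$, source $a\mapsto a\otimes1\otimes1$, target $a\mapsto1\otimes a\otimes1$, coproduct $(a\otimes b)\otimes h\mapsto((a\otimes1)\otimes h_{(1)})\otimes_A((1\otimes b)\otimes h_{(2)})$ and counit $(a\otimes b)\otimes h\mapsto a(h\triangleright b)$, the map $\nu:\mathcal K\otimes_{A^{op}}\mathcal K\to\mathcal K\otimes_A\mathcal K$, $(a\otimes b\otimes h)\otimes(a'\otimes b'\otimes h')\mapsto(a\otimes1\otimes h_{(1)})\otimes_A\big((h_{(2)}\triangleright a')\otimes b'(S(h'_{(2)})\triangleright b)\otimes h_{(3)}h'_{(1)}\big)$, is bijective, with inverse $(a\otimes b\otimes h)\otimes_A(a'\otimes b'\otimes h')\mapsto(a\otimes1\otimes h_{(1)})\otimes_{A^{op}}\big((b\otimes1\otimes S(h_{(2)}))\cdot(a'\otimes b'\otimes h')\big)$. Hence $(A\otimes A^{op})\bowtie H$ is a left $\times_A$-Hopf algebra.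
   Context: A left $R$-bialgebroid is a $\mathbb{C}$-algebra $\mathcal K$ with algebra maps $\mathfrak s:R\to\mathcal K$ (source), $\mathfrak t:R^{op}\to\mathcal K$ (target) with commuting ranges, $R$-bimodule structure $r_1\cdot k\cdot r_2=\mathfrak s(r_1)\mathfrak t(r_2)k$, and $R$-bimodule maps $\Delta(k)=k_{(1)}\otimes_R k_{(2)}$, $\varepsilon:\mathcal K\to R$ forming a coassociative counital $R$-coring, with $k_{(1)}\mathfrak t(r)\otimes_R k_{(2)}=k_{(1)}\otimes_R k_{(2)}\mathfrak s(r)$, $\Delta(1)=1\otimes_R1$, $\Delta(kk')=k_{(1)}k'_{(1)}\otimes_R k_{(2)}k'_{(2)}$, $\varepsilon(1)=1_R$, $\varepsilon(kk')=\varepsilon(k\mathfrak s(\varepsilon(k')))$. It is a left $\times_R$-Hopf algebra if $\nu:\mathcal K\otimes_{R^{op}}\mathcal K\to\mathcal K\otimes_R\mathcal K$, $k\otimes k'\mapsto k_{(1)}\otimes_R k_{(2)}k'$, is bijective, where the domain is balanced by $k\mathfrak t(r)\otimes k'=k\otimes\mathfrak t(r)k'$. Here $\mathcal K=(A\otimes A^{op})\bowtie H$ and $R=A$. The Kadison structure is taken as a left $A$-bialgebroid (Kadison). *)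

From HB Require Import structures.
From mathcomp Require Import all_boot all_order all_algebra.
Set Implicit Arguments. Unset Strict Implicit. Unset Printing Implicit Defensive.
Import GRing.Theory.
Local Open Scope ring_scope.

Section Defs.
Variable F : fieldType.

Definition bilin (U V W : lmodType F) (f : U -> V -> W) : Prop :=
  (forall u, linear (f u)) /\ (forall v, linear (fun u => f u v)).

Definition trilin (U V X W : lmodType F) (f : U -> V -> X -> W) : Prop :=
  (forall u v, linear (f u v)) /\ (forall u x, linear (fun v => f u v x))
  /\ (forall v x, linear (fun u => f u v x)).

(* Equality of two formal sums of simple tensors in U (x)_F V, i.e. equality
   of their images in the tensor product (universal property: all bilinear
   maps into all F-vector spaces agree). *)
Definition teq2 (U V : lmodType F) (s t : seq (U * V)) : Prop :=
  forall (W : lmodType F) (f : U -> V -> W), bilin f ->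
    \sum_(p <- s) f p.1 p.2 = \sum_(p <- t) f p.1 p.2.

(* Hopf algebra structure on an F-algebra H; the coproduct Delta(x) is given
   by a (Sweedler) representative  cop x : seq (H * H), i.e.
   Delta(x) = \sum_(p <- cop x) p.1 (x) p.2 in H (x)_F H. *)
Record HopfAlg (H : algType F) := {
  cop : H -> seq (H * H);
  eps : H -> F;
  antip : H -> H;
  cop_lin : forall (a : F) (x y : H),
    teq2 (cop (a *: x + y)) ([seq (a *: p.1, p.2) | p <- cop x] ++ cop y);
  cop_mul : forall x y : H,
    teq2 (cop (x * y)) [seq (p.1 * q.1, p.2 * q.2) | p <- cop x, q <- cop y];
  cop_one : teq2 (cop 1) [:: (1, 1)];
  cop_coass : forall (x : H) (W : lmodType F) (f : H -> H -> H -> W), trilin f ->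
    \sum_(p <- cop x) \sum_(q <- cop p.1) f q.1 q.2 p.2
    = \sum_(p <- cop x) \sum_(q <- cop p.2) f p.1 q.1 q.2;
  eps_lin : forall (a : F) (x y : H), eps (a *: x + y) = a * eps x + eps y;
  eps_mul : forall x y : H, eps (x * y) = eps x * eps y;
  eps_one : eps 1 = 1;
  counitl : forall x : H, \sum_(p <- cop x) eps p.1 *: p.2 = x;
  counitr : forall x : H, \sum_(p <- cop x) eps p.2 *: p.1 = x;
  antip_lin : forall (a : F) (x y : H), antip (a *: x + y) = a *: antip x + antip y;
  antipl : forall x : H, \sum_(p <- cop x) antip p.1 * p.2 = eps x *: 1;
  antipr : forall x : H, \sum_(p <- cop x) p.1 * antip p.2 = eps x *: 1
}.

Record ModAlg (H : algType F) (HH : HopfAlg H) (A : algType F)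
    (act : H -> A -> A) : Prop := {
  act_bilin : bilin act;
  act_mul : forall (x y : H) (a : A), act (x * y) a = act x (act y a);
  act_one : forall a : A, act 1 a = a;
  act_alg_mul : forall (h : H) (a b : A),
    act h (a * b) = \sum_(p <- cop HH h) act p.1 a * act p.2 b;
  act_alg_one : forall h : H, act h 1 = eps HH h *: 1
}.

Definition is_tensor3 (U V X K : lmodType F) (t : U -> V -> X -> K) : Prop :=
  trilin t /\
  forall (W : lmodType F) (f : U -> V -> X -> W), trilin f ->
    (exists g : K -> W, linear g /\ forall u v x, g (t u v x) = f u v x) /\
    (forall g1 g2 : K -> W, linear g1 -> linear g2 ->
       (forall u v x, g1 (t u v x) = g2 (t u v x)) -> g1 =1 g2).

Definition is_btensor (R : Type) (K T : lmodType F) (i : K -> K -> T)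
    (kR kL : R -> K -> K) : Prop :=
  bilin i /\ (forall r k k', i (kR r k) k' = i k (kL r k')) /\
  forall (W : lmodType F) (f : K -> K -> W), bilin f ->
    (forall r k k', f (kR r k) k' = f k (kL r k')) ->
    (exists g : T -> W, linear g /\ forall k k', g (i k k') = f k k') /\
    (forall g1 g2 : T -> W, linear g1 -> linear g2 ->
       (forall k k', g1 (i k k') = g2 (i k k')) -> g1 =1 g2).

End Defs.

From HB Require Import structures.
From mathcomp Require Import all_boot all_order all_algebra.
From Stdlib Require Import IndefiniteDescription.
Import GRing.Theory.
Local Open Scope ring_scope.
Set Implicit Arguments. Unset Strict Implicit. Unset Printing Implicit Defensive.

Section LinearMaps.
Variable F : fieldType.
Implicit Types U V W : lmodType F.

Lemma lin0 U V (f : U -> V) : linear f -> f 0 = 0.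
Proof.
move=> Lf; have := Lf 1 0 0; rewrite !scale1r addr0.
by move/(congr1 (fun z => z - f 0)); rewrite addrK subrr => <-.
Qed.

Lemma linZ U V (f : U -> V) (a : F) u : linear f -> f (a *: u) = a *: f u.
Proof. by move=> Lf; have := Lf a u 0; rewrite !addr0 (lin0 Lf) addr0. Qed.

Lemma lin_sum U V (f : U -> V) I (s : seq I) (G : I -> U) : linear f ->
  f (\sum_(i <- s) G i) = \sum_(i <- s) f (G i).
Proof.
move=> Lf; apply: (big_morph f) => [x y|]; last exact: lin0.
by have := Lf 1 x y; rewrite !scale1r.
Qed.

Lemma lin_id U : linear (fun x : U => x). Proof. by []. Qed.

Lemma lin_comp U V W (L : V -> W) (g : U -> V) :
  linear L -> linear g -> linear (fun x => L (g x)).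
Proof. by move=> LL Lg a u v; rewrite Lg LL. Qed.

Lemma lin_add U V (g1 g2 : U -> V) :
  linear g1 -> linear g2 -> linear (fun x => g1 x + g2 x).
Proof. by move=> L1 L2 a u v; rewrite L1 L2 scalerDr addrACA. Qed.

Lemma lin_sumP U V I (s : seq I) (G : U -> I -> V) :
  (forall i, linear (fun x => G x i)) -> linear (fun x => \sum_(i <- s) G x i).
Proof.
move=> LG a u v; rewrite scaler_sumr -big_split /=; apply: eq_bigr => i _.
exact: LG.
Qed.

Lemma scale_lin U (c : F) : linear (fun x : U => c *: x).
Proof. by move=> a u v; rewrite scalerDr !scalerA mulrC. Qed.

Lemma mull_lin (R : algType F) (a : R) : linear (fun x : R => a * x).
Proof. by move=> c u v; rewrite mulrDr scalerAr. Qed.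

Lemma mulr_lin (R : algType F) (a : R) : linear (fun x : R => x * a).
Proof. by move=> c u v; rewrite mulrDl scalerAl. Qed.

End LinearMaps.

Create HintDb linmaps.
#[export] Hint Extern 1 (linear _) => exact: lin_id : linmaps.
#[export] Hint Extern 1 (linear _) => exact: scale_lin : linmaps.
#[export] Hint Extern 1 (linear _) => exact: mull_lin : linmaps.
#[export] Hint Extern 1 (linear _) => exact: mulr_lin : linmaps.

Section SweedlerSums.
Variables (F : fieldType) (H : algType F) (HH : HopfAlg H).
Local Notation S := (antip HH).
Local Notation e := (eps HH).
Implicit Types (U V W : lmodType F).

Definition sw W (x : H) (f : H -> H -> W) : W := \sum_(p <- cop HH x) f p.1 p.2.

Lemma sw_ext W x (f g : H -> H -> W) : (forall u v, f u v = g u v) -> sw x f = sw x g.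
Proof. by move=> fg; apply: eq_bigr => p _; apply: fg. Qed.

Lemma sw_linC W V x (f : H -> H -> W) (L : W -> V) :
  linear L -> sw x (fun u v => L (f u v)) = L (sw x f).
Proof. by move=> LL; rewrite /sw (lin_sum _ _ LL). Qed.

Lemma sw_pushl U V W (B : U -> V -> W) x (f : H -> H -> U) k :
  (forall k, linear (fun u => B u k)) -> B (sw x f) k = sw x (fun u v => B (f u v) k).
Proof. by move=> LB; rewrite (@sw_linC _ _ x f (fun u => B u k)). Qed.

Lemma sw_pushr U V W (B : U -> V -> W) x (f : H -> H -> V) k :
  (forall k, linear (fun u => B k u)) -> B k (sw x f) = sw x (fun u v => B k (f u v)).
Proof. by move=> LB; rewrite (@sw_linC _ _ x f (fun u => B k u)). Qed.

Lemma sw_swap W x y (f : H -> H -> H -> H -> W) :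
  sw x (fun a b => sw y (f a b)) = sw y (fun c d => sw x (fun a b => f a b c d)).
Proof. by rewrite /sw exchange_big. Qed.

(* For bilinear f, the value of sw x f depends only on Delta(x) in H (x) H,
   hence is linear in x, multiplicative, and normalized at 1. *)
Lemma sw_lin W (f : H -> H -> W) : bilin f -> linear (fun x => sw x f).
Proof.
move=> [fl fr] a x y; rewrite /sw (@cop_lin _ _ HH a x y W f (conj fl fr)).
rewrite big_cat big_map /= scaler_sumr; congr (_ + _); apply: eq_bigr => p _.
by rewrite -[a *: p.1]addr0 fr (lin0 (fr p.2)) addr0.
Qed.

Lemma sw_mul W x y (f : H -> H -> W) : bilin f ->
  sw (x * y) f = sw x (fun u v => sw y (fun u' v' => f (u * u') (v * v'))).
Proof. by move=> Bf; rewrite /sw (@cop_mul _ _ HH x y W f Bf) big_allpairs_dep. Qed.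

Lemma sw_one W (f : H -> H -> W) : bilin f -> sw 1 f = f 1 1.
Proof. by move=> Bf; rewrite /sw (@cop_one _ _ HH W f Bf) big_seq1. Qed.

Lemma sw_comp_lin U W (g : U -> H) (f : H -> H -> W) :
  bilin f -> linear g -> linear (fun y => sw (g y) f).
Proof. by move=> Bf Lg; apply: (lin_comp (sw_lin Bf) Lg). Qed.

Lemma sw_param_lin U W x (f : U -> H -> H -> W) :
  (forall u v, linear (fun y => f y u v)) -> linear (fun y => sw x (f y)).
Proof. by move=> Lf; apply: lin_sumP => p; apply: Lf. Qed.

Lemma antip_linear : linear S.
Proof. by move=> a x y; rewrite antip_lin. Qed.

Lemma eps_linear : linear (e : H -> F^o).
Proof. exact: eps_lin. Qed.

Lemma eps_scale_lin U W (g : U -> H) (w : W) :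
  linear g -> linear (fun x => e (g x) *: w).
Proof. by move=> Lg c x y; rewrite Lg eps_lin scalerDl scalerA. Qed.

(* Iterated Sweedler sums: sw3 x g = \sum g(x_(1), x_(2), x_(3)), where the
   second tensor factor is split (by coassociativity any split is the same). *)
Definition sw3 W x (g : H -> H -> H -> W) := sw x (fun a y => sw y (g a)).
Definition sw4 W x (g : H -> H -> H -> H -> W) := sw x (fun a y => sw3 y (g a)).
Definition sw5 W x (g : H -> H -> H -> H -> H -> W) := sw x (fun a y => sw4 y (g a)).

Lemma sw_swap3 W x y (G : H -> H -> H -> H -> H -> W) :
  sw x (fun a b => sw3 y (G a b)) = sw3 y (fun c d f => sw x (fun a b => G a b c d f)).
Proof.
rewrite /sw3 sw_swap; apply: sw_ext => c z; rewrite sw_swap.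
by apply: sw_ext => d f.
Qed.

Definition quadlin W (g : H -> H -> H -> H -> W) :=
  [/\ forall b c d, linear (fun a => g a b c d), forall a c d, linear (fun b => g a b c d),
      forall a b d, linear (fun c => g a b c d) & forall a b c, linear (fun d => g a b c d)].
Definition quintlin W (g : H -> H -> H -> H -> H -> W) :=
  [/\ forall b c d x, linear (fun a => g a b c d x), forall a c d x, linear (fun b => g a b c d x),
      forall a b d x, linear (fun c => g a b c d x), forall a b c x, linear (fun d => g a b c d x)
    & forall a b c d, linear (fun x => g a b c d x)].

End SweedlerSums.

#[export] Hint Extern 1 (linear _) => exact: antip_linear : linmaps.

(* [lin] proves linearity of a function built from linear primitives by sums,
   Sweedler sums and composition; [multilin] splits multilinearity goals. *)
Ltac lin_prim := first
  [ solve [eauto with linmaps]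
  | match goal with Hl : context [linear _] |- _ => exact: Hl end ].
Ltac lin := cbv beta; first
  [ lin_prim
  | (apply: sw_comp_lin; [multilin | lin])
  | (apply: sw_param_lin => ? ?; lin)
  | (apply: eps_scale_lin; lin)
  | (progress unfold sw3, sw4, sw5; lin)
  | (apply: lin_sumP => ?; lin)
  | (apply: lin_add; lin)
  | match goal with
    | |- linear (fun x => ?L (@?g x)) =>
        apply (@lin_comp _ _ _ _ (fun z => L z) g); [lin_prim | lin]
    | |- linear (fun x => ?L (@?g x) ?b) =>
        apply (@lin_comp _ _ _ _ (fun z => L z b) g); [lin_prim | lin]
    | |- linear (fun x => ?L (@?g x) ?b ?c) =>
        apply (@lin_comp _ _ _ _ (fun z => L z b c) g); [lin_prim | lin]
    | |- linear (fun x => ?L (@?g x) ?b ?c ?d) =>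
        apply (@lin_comp _ _ _ _ (fun z => L z b c d) g); [lin_prim | lin]
    end ]
with multilin := cbv beta; lazymatch goal with
  | |- bilin _ => split => ?; lin
  | |- trilin _ => split; [|split] => ? ?; lin
  | |- quadlin _ => split => ? ? ?; lin
  | |- quintlin _ => split => ? ? ? ?; lin
  end.

Section HopfIdentities.
Variables (F : fieldType) (H : algType F) (HH : HopfAlg H).
Local Notation S := (antip HH).
Local Notation e := (eps HH).
Local Notation sw := (sw HH).
Local Notation sw3 := (sw3 HH).
Local Notation sw4 := (sw4 HH).
Local Notation sw5 := (sw5 HH).
Implicit Types (W : lmodType F).

Lemma sw3_ext W x (f g : H -> H -> H -> W) :
  (forall a b c, f a b c = g a b c) -> sw3 x f = sw3 x g.
Proof. by move=> E; do 2 (apply: sw_ext => ? ?); apply: E. Qed.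

Lemma sw4_ext W x (f g : H -> H -> H -> H -> W) :
  (forall a b c d, f a b c d = g a b c d) -> sw4 x f = sw4 x g.
Proof. by move=> E; do 3 (apply: sw_ext => ? ?); apply: E. Qed.

Lemma sw5_ext W x (f g : H -> H -> H -> H -> H -> W) :
  (forall a b c d u, f a b c d u = g a b c d u) -> sw5 x f = sw5 x g.
Proof. by move=> E; do 4 (apply: sw_ext => ? ?); apply: E. Qed.

Lemma sw_coassoc W x (g : H -> H -> H -> W) : trilin g ->
  sw x (fun a b => sw a (fun a1 a2 => g a1 a2 b)) = sw3 x g.
Proof. exact: cop_coass. Qed.

Lemma sw3_coassoc1 W x (g : H -> H -> H -> H -> W) : quadlin g ->
  sw3 x (fun a b c => sw a (fun a1 a2 => g a1 a2 b c)) = sw4 x g.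
Proof.
case=> L1 L2 L3 L4; rewrite /sw3 /sw4.
under sw_ext => a y do rewrite sw_swap.
by rewrite (@sw_coassoc _ x (fun a1 a2 y => sw y (g a1 a2))); last by multilin.
Qed.

Lemma sw3_coassoc2 W x (g : H -> H -> H -> H -> W) : quadlin g ->
  sw3 x (fun a b c => sw b (fun b1 b2 => g a b1 b2 c)) = sw4 x g.
Proof.
case=> L1 L2 L3 L4; apply: sw_ext => a y.
by rewrite (@sw_coassoc _ y (g a)); last by multilin.
Qed.

Lemma sw4_coassoc2 W x (g : H -> H -> H -> H -> H -> W) : quintlin g ->
  sw4 x (fun a b c d => sw b (fun b1 b2 => g a b1 b2 c d)) = sw5 x g.
Proof.
case=> L1 L2 L3 L4 L5; apply: sw_ext => a y.
by rewrite (@sw3_coassoc1 _ y (g a)); last by multilin.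
Qed.

Lemma sw4_coassoc3 W x (g : H -> H -> H -> H -> H -> W) : quintlin g ->
  sw4 x (fun a b c d => sw c (fun c1 c2 => g a b c1 c2 d)) = sw5 x g.
Proof.
case=> L1 L2 L3 L4 L5; apply: sw_ext => a y.
by rewrite (@sw3_coassoc2 _ y (g a)); last by multilin.
Qed.

Lemma sw_counitl W x (L : H -> W) : linear L -> sw x (fun u v => e u *: L v) = L x.
Proof.
move=> LL; rewrite -{2}(counitl HH x) (lin_sum _ _ LL) /sw.
by apply: eq_bigr => p _; rewrite (linZ _ _ LL).
Qed.

Lemma sw_counitr W x (L : H -> W) : linear L -> sw x (fun u v => e v *: L u) = L x.
Proof.
move=> LL; rewrite -{2}(counitr HH x) (lin_sum _ _ LL) /sw.
by apply: eq_bigr => p _; rewrite (linZ _ _ LL).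
Qed.

Lemma sw_antipl W x (L : H -> W) : linear L -> sw x (fun u v => L (S u * v)) = e x *: L 1.
Proof. by move=> LL; rewrite (sw_linC HH _ _ LL) /sw antipl (linZ _ _ LL). Qed.

Lemma sw_antipr W x (L : H -> W) : linear L -> sw x (fun u v => L (u * S v)) = e x *: L 1.
Proof. by move=> LL; rewrite (sw_linC HH _ _ LL) /sw antipr (linZ _ _ LL). Qed.

Lemma sw3_antipr W x (G : H -> H -> W) : bilin G ->
  sw3 x (fun a b c => G a (b * S c)) = G x 1.
Proof.
case=> L1 L2; rewrite /sw3.
under sw_ext => a y do (rewrite sw_antipr; last by lin).
by rewrite sw_counitr.
Qed.

Lemma sw3_antipl W x (G : H -> H -> W) : bilin G ->
  sw3 x (fun a b c => G a (S b * c)) = G x 1.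
Proof.
case=> L1 L2; rewrite /sw3.
under sw_ext => a y do (rewrite sw_antipl; last by lin).
by rewrite sw_counitr.
Qed.

Lemma sw4_antipr W x (G : H -> H -> H -> W) : trilin G ->
  sw4 x (fun a b c d => G a b (c * S d)) = sw x (fun a b => G a b 1).
Proof.
case=> L3 [L2 L1]; apply: sw_ext => a y.
by rewrite (@sw3_antipr _ y (G a)); last by multilin.
Qed.

Lemma sw5_antipr W x (G : H -> H -> H -> H -> W) : quadlin G ->
  sw5 x (fun a b c d f => G a b (c * S d) f) = sw3 x (fun a b f => G a b 1 f).
Proof.
case=> L1 L2 L3 L4; rewrite -sw4_coassoc3; last by multilin.
under sw4_ext => a b c d do (rewrite (@sw_antipr _ c (fun z => G a b z d)); last by lin).
do 2 (apply: sw_ext => ? ?).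
by rewrite sw_counitl; last by lin.
Qed.

(* S(1) = 1, from S(1) 1 = e(1) 1 since Delta(1) = 1 (x) 1. *)
Lemma antip1 : S 1 = 1.
Proof.
have := antipl HH 1; rewrite eps_one scale1r.
have -> : \sum_(p <- cop HH 1) S p.1 * p.2 = sw 1 (fun u v => S u * v) by [].
by rewrite sw_one ?mulr1 //; multilin.
Qed.

(* e(S x) = e x: apply e to  x = \sum e(x_(2)) x_(1)  after S, and compare with
   e(x) 1 = \sum S(x_(1)) x_(2)  using multiplicativity of e. *)
Lemma eps_antip x : e (S x) = e x.
Proof.
have Le := eps_linear HH.
have eZ c y : e (c *: y) = c * e y by exact: (linZ _ _ Le).
rewrite -{1}(counitr HH x) (lin_sum _ _ (antip_linear HH)) (lin_sum _ _ Le).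
have -> : e x = e (e x *: 1) by rewrite eZ eps_one mulr1.
rewrite -antipl (lin_sum _ _ Le); apply: eq_bigr => p _.
by rewrite (linZ _ _ (antip_linear HH)) eZ eps_mul mulrC.
Qed.

(* The antipode is anti-multiplicative: both sides equal the sum
   S(x_(1) y_(1)) x_(2) y_(2) S(y_(3)) S(x_(3)), contracted in two ways. *)
Lemma antip_mul x y : S (x * y) = S y * S x.
Proof.
pose T a b c a' b' c' := S (a * a') * (b * b') * S c' * S c.
have E1 : sw3 x (fun a b c => sw3 y (T a b c)) = S y * S x.
  rewrite -(@sw_coassoc _ x (fun a b c => sw3 y (T a b c))); last by rewrite /T; multilin.
  under sw_ext => u c do under sw_ext => a b do
    (rewrite -(@sw_coassoc _ y (T a b c)); last by rewrite /T; multilin).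
  under sw_ext => u c do rewrite sw_swap.
  under sw_ext => u c do under sw_ext => u' c' do
    (rewrite -(@sw_mul _ _ HH _ u u' (fun p q => S p * q * S c' * S c)); last by multilin).
  under sw_ext => u c do under sw_ext => u' c' do
    (rewrite (@sw_antipl _ (u * u') (fun z => z * S c' * S c)); last by lin).
  under sw_ext => u c do under sw_ext => u' c' do rewrite eps_mul mul1r mulrC -scalerA.
  under sw_ext => u c do (rewrite (@sw_counitl _ y (fun z => e u *: (S z * S c))); last by lin).
  by rewrite (@sw_counitl _ x (fun z => S y * S z)) //; lin.
have E2 : sw3 x (fun a b c => sw3 y (T a b c)) = S (x * y).
  rewrite /T; under sw3_ext => a b c do under sw3_ext => a' b' c' do
    rewrite -!mulrA (mulrA b').
  under sw3_ext => a b c do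
    (rewrite (@sw3_antipr _ y (fun a' z => S (a * a') * (b * (z * S c)))); last by multilin).
  under sw3_ext => a b c do rewrite mul1r.
  by rewrite (@sw3_antipr _ x (fun a z => S (a * y) * z)) ?mulr1; last by multilin.
by rewrite -E2 E1.
Qed.

(* With z = S(x_(1)) x_(2), both sides are contractions of the fourfold sum of
   g(z_(1) S(x_(4)), z_(2) S(x_(3))): contracting z = e(x_(1)) gives the right
   side, expanding Delta z and contracting x_(2) S(x_(3)) gives the left side. *)
Lemma antip_cop W x (g : H -> H -> W) : bilin g ->
  sw (S x) g = sw x (fun u v => g (S v) (S u)).
Proof.
case=> L1 L2.
pose K z b c := sw z (fun p q => g (p * S c) (q * S b)).
have E1 : sw4 x (fun a b c d => K (S a * b) c d) = sw x (fun u v => g (S v) (S u)).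
  rewrite -sw3_coassoc1; last by rewrite /K; multilin.
  under sw3_ext => a b c do (rewrite (@sw_antipl _ a (fun z => K z b c)); last by rewrite /K; lin).
  rewrite -(@sw_coassoc _ x (fun a b c => e a *: K 1 b c)); last by rewrite /K; multilin.
  apply: sw_ext => u v; rewrite (@sw_counitl _ u (fun b => K 1 b v)); last by rewrite /K; lin.
  by rewrite /K sw_one ?mul1r //; multilin.
have E2 : sw4 x (fun a b c d => K (S a * b) c d) = sw (S x) g.
  rewrite /K; under sw4_ext => a b c d do (rewrite sw_mul; last by multilin).
  under sw4_ext => a b c d do rewrite sw_swap.
  rewrite sw4_coassoc2; last by multilin.
  under sw5_ext => a b c d f do under sw_ext => p1 p2 do rewrite -[p2 * c * S d]mulrA.
  rewrite (@sw5_antipr _ x (fun a b z f => sw (S a) (fun p1 p2 => g (p1 * b * S f) (p2 * z))));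
    last by multilin.
  under sw3_ext => a b f do under sw_ext => p1 p2 do rewrite -[p1 * b * S f]mulrA.
  rewrite (@sw3_antipr _ x (fun a z => sw (S a) (fun p1 p2 => g (p1 * z) (p2 * 1))));
    last by multilin.
  by apply: sw_ext => u v; rewrite !mulr1.
by rewrite -E2 E1.
Qed.

End HopfIdentities.

Section TensorProducts.
Variable F : fieldType.
Implicit Types (U V X K P T W : lmodType F).

Lemma tensor3_ext U V X K W (t : U -> V -> X -> K) (g1 g2 : K -> W) :
  is_tensor3 t -> linear g1 -> linear g2 ->
  (forall u v x, g1 (t u v x) = g2 (t u v x)) -> g1 =1 g2.
Proof.
move=> [[Lt3 [Lt2 Lt1]] univ] L1 L2 E.
have [_ uniq] := univ W (fun u v x => g1 (t u v x)) ltac:(multilin).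
exact: uniq.
Qed.

Lemma tensor3_lift U V X K P W (t : U -> V -> X -> K) (f : P -> U -> V -> X -> W) :
  is_tensor3 t -> (forall p, trilin (f p)) -> (forall u v x, linear (fun p => f p u v x)) ->
  exists g : K -> P -> W, bilin g /\ forall u v x p, g (t u v x) p = f p u v x.
Proof.
move=> tens Tf Lf.
have lift p : exists gp : K -> W, linear gp /\ forall u v x, gp (t u v x) = f p u v x.
  by have [[gp [Lgp Egp]] _] := tens.2 W (f p) (Tf p); exists gp.
pose G p := proj1_sig (constructive_indefinite_description _ (lift p)).
have [LG EG] : (forall p, linear (G p)) /\ (forall p u v x, G p (t u v x) = f p u v x).
  by split=> p; case: (proj2_sig (constructive_indefinite_description _ (lift p))).
exists (fun k p => G p k); split; last by move=> u v x p; apply: EG.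
split=> [k c p q|p]; last exact: LG.
move: k; apply: (@tensor3_ext _ _ _ _ _ t (G (c *: p + q)) (fun k => c *: G p k + G q k)) => //.
- by lin.
- by move=> u v x; rewrite !EG; apply: Lf.
Qed.

Lemma btensor_ext (R : Type) K T W (i : K -> K -> T) (kR kL : R -> K -> K) (g1 g2 : T -> W) :
  is_btensor i kR kL -> linear g1 -> linear g2 ->
  (forall k k', g1 (i k k') = g2 (i k k')) -> g1 =1 g2.
Proof.
move=> [[Bi1 Bi2] [bal univ]] L1 L2 E.
have [_ uniq] := univ W (fun k k' => g1 (i k k')) ltac:(multilin)
  (fun r k k' => congr1 g1 (bal r k k')).
exact: uniq.
Qed.

Lemma btensor3_ext (R : Type) U V X K T W (t : U -> V -> X -> K) (i : K -> K -> T)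
    (kR kL : R -> K -> K) (g1 g2 : T -> W) :
  is_tensor3 t -> is_btensor i kR kL -> linear g1 -> linear g2 ->
  (forall u v x k', g1 (i (t u v x) k') = g2 (i (t u v x) k')) -> g1 =1 g2.
Proof.
move=> tens btens L1 L2 E; apply: (btensor_ext btens) => // k k'.
have [[_ Li1] _] := btens.
by move: k; apply: (tensor3_ext tens) => //; lin.
Qed.

End TensorProducts.

Section KadisonAlgebra.
Variables (F : fieldType) (H : algType F) (HH : HopfAlg H)
  (A : algType F) (act : H -> A -> A) (MA : ModAlg HH act)
  (K : lmodType F) (tK : A -> A -> H -> K) (tensK : is_tensor3 tK)
  (mulK : K -> K -> K) (mulK_bil : bilin mulK).
Hypothesis mulK_gen : forall (a b : A) (h : H) (a' b' : A) (h' : H),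
  mulK (tK a b h) (tK a' b' h')
  = \sum_(p <- cop HH h) \sum_(q <- cop HH h')
      tK (a * act p.1 a') (b' * act (antip HH q.2) b) (p.2 * q.1).

Local Notation S := (antip HH).
Local Notation sw := (sw HH).
Local Notation sw3 := (sw3 HH).

Lemma tK_lin_a b h : linear (fun a => tK a b h). Proof. by case: tensK => [[_ [_ L]] _]. Qed.
Lemma tK_lin_b a h : linear (fun b => tK a b h). Proof. by case: tensK => [[_ [L _]] _]. Qed.
Lemma tK_lin_h a b : linear (fun h => tK a b h). Proof. by case: tensK => [[L _] _]. Qed.
Lemma mulK_lin_l k : linear (fun x => mulK x k). Proof. by case: mulK_bil. Qed.
Lemma mulK_lin_r k : linear (fun x => mulK k x). Proof. by case: mulK_bil. Qed.
Lemma act_lin_h a : linear (fun h => act h a). Proof. by case: (act_bilin MA). Qed.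
Lemma act_lin_a h : linear (fun a => act h a). Proof. by case: (act_bilin MA). Qed.

#[local] Hint Extern 1 (linear _) =>
  first [ exact: tK_lin_a | exact: tK_lin_b | exact: tK_lin_h
        | exact: mulK_lin_l | exact: mulK_lin_r
        | exact: act_lin_h | exact: act_lin_a ] : linmaps.

Lemma tK_scale_a c a b h : tK (c *: a) b h = c *: tK a b h.
Proof. exact: (linZ _ _ (tK_lin_a b h)). Qed.

Lemma tK_scale_b c a b h : tK a (c *: b) h = c *: tK a b h.
Proof. exact: (linZ _ _ (tK_lin_b a h)). Qed.

Lemma mulK_sw a b h a' b' h' : mulK (tK a b h) (tK a' b' h') =
  sw h (fun p1 p2 => sw h' (fun q1 q2 => tK (a * act p1 a') (b' * act (S q2) b) (p2 * q1))).
Proof. exact: mulK_gen. Qed.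

Lemma act_mul_sw h a b : act h (a * b) = sw h (fun p q => act p a * act q b).
Proof. exact: (act_alg_mul MA). Qed.

Definition kad_triple a b h a' b' h' a'' b'' h'' : K :=
  sw3 h (fun p1 p2 p3 => sw3 h' (fun q1 q2 q3 => sw3 h'' (fun s1 s2 s3 =>
    tK (a * (act p1 a' * act (p2 * q1) a'')) (b'' * (act (S s3) b' * act (S s2 * S q3) b))
       (p3 * (q2 * s1))))).

(* The left bracketing: the two actions on b combine by the module-algebra law
   and anti-comultiplicativity of S. *)
Lemma mulK_triple_l a b h a' b' h' a'' b'' h'' :
  mulK (mulK (tK a b h) (tK a' b' h')) (tK a'' b'' h'') = kad_triple a b h a' b' h' a'' b'' h''.
Proof.
rewrite mulK_sw sw_pushl; last by lin.
under sw_ext => p1 p2 do (rewrite sw_pushl; last by lin).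
under sw_ext => p1 p2 do under sw_ext => q1 q2 do rewrite mulK_sw.
under sw_ext => p1 p2 do under sw_ext => q1 q2 do (rewrite sw_mul; last by multilin).
under sw_ext => p1 p2 do rewrite sw_swap.
under sw_ext => p1 p2 do under sw_ext => u1 u2 do (rewrite sw_coassoc; last by multilin).
under sw_ext => p1 p2 do under sw_ext => u1 u2 do under sw3_ext => v1 v2 q3 do
  under sw_ext => s1 s2 do (rewrite act_mul_sw antip_cop; last by multilin).
under sw_ext => p1 p2 do under sw_ext => u1 u2 do under sw3_ext => v1 v2 q3 do
  under sw_ext => s1 s2 do under sw_ext => c d do rewrite -(act_mul MA).
under sw_ext => p1 p2 do under sw_ext => u1 u2 do under sw3_ext => v1 v2 q3 do
  under sw_ext => s1 s2 do (rewrite -(sw_linC HH _ _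
     (L := fun w => tK (a * act p1 a' * act (u1 * v1) a'') (b'' * w) (u2 * v2 * s1))); last by lin).
apply: sw_ext => p1 p2; apply: sw_ext => u1 u2; apply: sw3_ext => v1 v2 q3.
apply: sw_ext => s1 y; apply: sw_ext => s2 s3.
by rewrite !mulrA.
Qed.

(* The right bracketing: the two actions on a' and a'' combine by the
   module-algebra law, and S(h'_(2) h''_(1)) = S h''_(1) S h'_(2). *)
Lemma mulK_triple_r a b h a' b' h' a'' b'' h'' :
  mulK (tK a b h) (mulK (tK a' b' h') (tK a'' b'' h'')) = kad_triple a b h a' b' h' a'' b'' h''.
Proof.
rewrite (mulK_sw a') sw_pushr; last by lin.
under sw_ext => q1 q2 do (rewrite sw_pushr; last by lin).
under sw_ext => q1 q2 do under sw_ext => s1 s2 do rewrite mulK_sw.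
under sw_ext => q1 q2 do under sw_ext => s1 s2 do under sw_ext => p1 p2 do
  (rewrite sw_mul; last by multilin).
under sw_ext => q1 q2 do under sw_ext => s1 s2 do under sw_ext => p1 p2 do
  under sw_ext => u1 u2 do under sw_ext => v1 v2 do rewrite act_mul_sw antip_mul.
under sw_ext => q1 q2 do under sw_ext => s1 s2 do under sw_ext => p1 p2 do
  under sw_ext => u1 u2 do under sw_ext => v1 v2 do under sw_ext => c d do
    rewrite -(act_mul MA).
under sw_ext => q1 q2 do under sw_ext => s1 s2 do under sw_ext => p1 p2 do
  under sw_ext => u1 u2 do under sw_ext => v1 v2 do
    (rewrite -(sw_linC HH _ _ (L := fun w => tK (a * w)
        (b'' * act (S s2) b' * act (S v2 * S u2) b) (p2 * (u1 * v1)))); last by lin).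
under sw_ext => q1 q2 do under sw_ext => s1 s2 do under sw_ext => p1 p2 do
  under sw_ext => u1 u2 do rewrite sw_swap.
under sw_ext => q1 q2 do under sw_ext => s1 s2 do under sw_ext => p1 p2 do rewrite sw_swap.
under sw_ext => q1 q2 do under sw_ext => s1 s2 do (rewrite sw_coassoc; last by multilin).
under sw_ext => q1 q2 do rewrite sw_swap3.
rewrite sw_swap3.
under sw3_ext => c d p2 do under sw_ext => q1 q2 do rewrite sw_swap.
under sw3_ext => c d p2 do under sw_ext => q1 q2 do under sw_ext => u1 u2 do
  (rewrite sw_coassoc; last by multilin).
apply: sw3_ext => c d p2; apply: sw_ext => q1 y; apply: sw_ext => u1 u2.
apply: sw_ext => v1 z; apply: sw_ext => v2 s2.
by rewrite !mulrA.
Qed.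

Lemma mulK_assoc x y z : mulK (mulK x y) z = mulK x (mulK y z).
Proof.
move: x; apply: (tensor3_ext tensK (g1 := fun x => mulK (mulK x y) z)); [lin | lin | move=> a b h].
move: y; apply: (tensor3_ext tensK (g1 := fun y => mulK (mulK (tK a b h) y) z));
  [lin | lin | move=> a' b' h'].
move: z; apply: (tensor3_ext tensK (g1 := fun z => mulK (mulK (tK a b h) (tK a' b' h')) z));
  [lin | lin | move=> a'' b'' h''].
by rewrite mulK_triple_l mulK_triple_r.
Qed.

(* Products with the images of the source s(r) = r (x) 1 (x) 1, the target
   t(r) = 1 (x) r (x) 1 and of H = 1 (x) 1 (x) H that the maps nu and nu^-1 use. *)
Lemma mulK_tgt_r a b h r : mulK (tK a b h) (tK 1 r 1) = tK a (r * b) h.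
Proof.
rewrite mulK_sw; under sw_ext => p1 p2 do (rewrite sw_one; last by multilin).
under sw_ext => p1 p2 do
  rewrite (act_alg_one MA) antip1 (act_one MA) !mulr1 mulr_algr tK_scale_a.
by rewrite sw_counitl //; lin.
Qed.

Lemma mulK_factor a b h : mulK (tK a 1 h) (tK 1 b 1) = tK a b h.
Proof. by rewrite mulK_tgt_r mulr1. Qed.

Lemma mulK_tgt_l r a b h :
  mulK (tK 1 r 1) (tK a b h) = sw h (fun p1 p2 => tK a (b * act (S p2) r) p1).
Proof.
rewrite mulK_sw sw_one; last by multilin.
by apply: sw_ext => q1 q2; rewrite (act_one MA) !mul1r.
Qed.

Lemma mulK_src_r b x r :
  mulK (tK b 1 x) (tK r 1 1) = sw x (fun p1 p2 => tK (b * act p1 r) 1 p2).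
Proof.
rewrite mulK_sw; apply: sw_ext => p1 p2; rewrite sw_one; last by multilin.
by rewrite antip1 (act_one MA) mul1r !mulr1.
Qed.

Lemma mulK_H_tgt x b y : mulK (tK 1 1 x) (tK 1 b y) = tK 1 b (x * y).
Proof.
rewrite mulK_sw; under sw_ext => p1 p2 do under sw_ext => q1 q2 do
  rewrite !(act_alg_one MA) mul1r mulr_algr eps_antip tK_scale_b.
under sw_ext => p1 p2 do (rewrite sw_counitr; last by lin).
under sw_ext => p1 p2 do rewrite tK_scale_a.
by rewrite sw_counitl //; lin.
Qed.

Lemma mulK_H_src x b y :
  mulK (tK 1 1 x) (tK b 1 y) = sw x (fun p1 p2 => tK (act p1 b) 1 (p2 * y)).
Proof.
rewrite mulK_sw; under sw_ext => p1 p2 do under sw_ext => q1 q2 do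
  rewrite (act_alg_one MA) !mul1r eps_antip tK_scale_b.
by apply: sw_ext => p1 p2; rewrite sw_counitr; last by lin.
Qed.

(* The balanced tensor products T1 = K (x)_{A^op} K, where k t(r) (x) k' = k (x) t(r) k',
   and T2 = K (x)_A K, where t(r) k (x) k' = k (x) s(r) k'. *)
Variables (T1 : lmodType F) (i1 : K -> K -> T1)
  (tens1 : is_btensor i1 (fun r k => mulK k (tK 1 r 1)) (fun r k => mulK (tK 1 r 1) k))
  (T2 : lmodType F) (i2 : K -> K -> T2)
  (tens2 : is_btensor i2 (fun r k => mulK (tK 1 r 1) k) (fun r k => mulK (tK r 1 1) k)).

Lemma i1_lin_l k : linear (fun x => i1 x k). Proof. by case: tens1 => [[]]. Qed.
Lemma i1_lin_r k : linear (fun x => i1 k x). Proof. by case: tens1 => [[]]. Qed.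
Lemma i2_lin_l k : linear (fun x => i2 x k). Proof. by case: tens2 => [[]]. Qed.
Lemma i2_lin_r k : linear (fun x => i2 k x). Proof. by case: tens2 => [[]]. Qed.

#[local] Hint Extern 1 (linear _) =>
  first [ exact: i1_lin_l | exact: i1_lin_r | exact: i2_lin_l | exact: i2_lin_r ] : linmaps.

(* The Galois map nu : K (x)_{A^op} K -> K (x)_A K exists: the formula is
   linear in each variable and balanced for the right t(A)-action, by
   associativity and (a (x) r b (x) h) = (a (x) b (x) h) t(r). *)
Lemma nu_exists : exists nu : T1 -> T2, linear nu /\
  forall a b h k', nu (i1 (tK a b h) k') = sw h (fun u v => i2 (tK a 1 u) (mulK (tK 1 b v) k')).
Proof.
have [g [[Lg2 Lg1] gE]] :=
  tensor3_lift tensK (f := fun k' a b h => sw h (fun u v => i2 (tK a 1 u) (mulK (tK 1 b v) k')))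
    ltac:(move=> ?; multilin) ltac:(move=> ? ? ?; lin).
have bal r k k' : g (mulK k (tK 1 r 1)) k' = g k (mulK (tK 1 r 1) k').
  move: k; apply: (tensor3_ext tensK); [lin | lin | move=> a b h].
  rewrite mulK_tgt_r !gE; apply: sw_ext => u v.
  by rewrite -mulK_assoc mulK_tgt_r.
have [[nu [Lnu nuE]] _] := tens1.2.2 T2 g (conj Lg2 Lg1) bal.
by exists nu; split=> // a b h k'; rewrite nuE gE.
Qed.

(* The inverse map nu^-1 : K (x)_A K -> K (x)_{A^op} K exists; balancing for
   the left t(A)-action uses that the antipode reverses the coproduct. *)
Lemma nuinv_exists : exists nuinv : T2 -> T1, linear nuinv /\
  forall a b h k',
    nuinv (i2 (tK a b h) k') = sw h (fun u v => i1 (tK a 1 u) (mulK (tK b 1 (S v)) k')).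
Proof.
have [g [[Lg2 Lg1] gE]] :=
  tensor3_lift tensK (f := fun k' a b h => sw h (fun u v => i1 (tK a 1 u) (mulK (tK b 1 (S v)) k')))
    ltac:(move=> ?; multilin) ltac:(move=> ? ? ?; lin).
have bal r k k' : g (mulK (tK 1 r 1) k) k' = g k (mulK (tK r 1 1) k').
  move: k; apply: (tensor3_ext tensK); [lin | lin | move=> a b h].
  rewrite mulK_tgt_l sw_pushl; last by lin.
  under sw_ext => p1 p2 do rewrite gE.
  rewrite sw_coassoc; last by multilin.
  rewrite gE; apply: sw_ext => u y.
  rewrite -mulK_assoc mulK_src_r antip_cop; last by multilin.
  by rewrite sw_pushl ?sw_pushr //; lin.
have [[nuinv [Lnuinv nuinvE]] _] := tens2.2.2 T1 g (conj Lg2 Lg1) bal.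
by exists nuinv; split=> // a b h k'; rewrite nuinvE gE.
Qed.

Section Inverse.
Variables (nu : T1 -> T2) (nuinv : T2 -> T1).
Hypotheses (Lnu : linear nu) (Lnuinv : linear nuinv).
Hypothesis nuE : forall a b h k',
  nu (i1 (tK a b h) k') = sw h (fun u v => i2 (tK a 1 u) (mulK (tK 1 b v) k')).
Hypothesis nuinvE : forall a b h k',
  nuinv (i2 (tK a b h) k') = sw h (fun u v => i1 (tK a 1 u) (mulK (tK b 1 (S v)) k')).

(* nu^-1 (nu (a (x) b (x) h (x) k'))
     = (a (x) 1 (x) h_(1)) (x) (1 (x) b (x) S(h_(2)) h_(3)) k' = (a (x) b (x) h) (x) k'. *)
Lemma nuinv_nu : cancel nu nuinv.
Proof.
apply: (btensor3_ext tensK tens1 (g1 := fun t => nuinv (nu t)) (g2 := id)); [lin | lin |].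
move=> a b h k'; rewrite nuE -(sw_linC HH _ _ Lnuinv).
under sw_ext => u v do rewrite nuinvE.
rewrite sw_coassoc; last by multilin.
under sw3_ext => p q v do rewrite -mulK_assoc mulK_H_tgt.
rewrite (@sw3_antipl _ _ HH _ h (fun p z => i1 (tK a 1 p) (mulK (tK 1 b z) k'))); last by multilin.
by rewrite -tens1.2.1 mulK_factor.
Qed.

(* nu (nu^-1 (a (x) b (x) h (x) k')) collapses through x_(1) S(x_(2)) = e(x)
   and S(x_(1)) x_(2) = e(x), moving b across the tensor sign by balancing. *)
Lemma nu_nuinv : cancel nuinv nu.
Proof.
apply: (btensor3_ext tensK tens2 (g1 := fun t => nu (nuinv t)) (g2 := id)); [lin | lin |].
move=> a b h k'; rewrite nuinvE -(sw_linC HH _ _ Lnu).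
under sw_ext => u v do rewrite nuE.
rewrite sw_coassoc; last by multilin.
under sw3_ext => p q v do rewrite -mulK_assoc mulK_H_src.
under sw3_ext => p q v do (rewrite sw_pushl; last by lin).
under sw3_ext => p q v do (rewrite sw_pushr; last by lin).
rewrite sw3_coassoc2; last by multilin.
rewrite (@sw4_antipr _ _ HH _ h (fun p c z => i2 (tK a 1 p) (mulK (tK (act c b) 1 z) k')));
  last by multilin.
under sw_ext => p c do rewrite -tens2.2.1 mulK_tgt_l.
under sw_ext => p c do (rewrite sw_pushl; last by lin).
rewrite sw_coassoc; last by multilin.
under sw3_ext => p1 p2 c do rewrite mul1r -(act_mul MA).
rewrite (@sw3_antipl _ _ HH _ h (fun p z => i2 (tK a (act z b) p) k')); last by multilin.
by rewrite (act_one MA).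
Qed.

End Inverse.
End KadisonAlgebra.

Unset Implicit Arguments.

Theorem mainTheorem10 (F : fieldType) (H : algType F) (HH : HopfAlg H)
  (A : algType F) (act : H -> A -> A) (MA : ModAlg HH act)
  (* K = (A (x) A^op) >< H, underlying space A (x) A (x) H *)
  (K : lmodType F) (tK : A -> A -> H -> K) (tensK : is_tensor3 tK)
  (mulK : K -> K -> K) (mulK_bil : bilin mulK)
  (mulK_gen : forall (a b : A) (h : H) (a' b' : A) (h' : H),
     mulK (tK a b h) (tK a' b' h')
     = \sum_(p <- cop HH h) \sum_(q <- cop HH h')
         tK (a * act p.1 a') (b' * act (antip HH q.2) b) (p.2 * q.1))
  (* T1 = K (x)_{A^op} K : k t(r) (x) k' = k (x) t(r) k' *)
  (T1 : lmodType F) (i1 : K -> K -> T1)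
  (tens1 : is_btensor i1 (fun r k => mulK k (tK 1 r 1))
                         (fun r k => mulK (tK 1 r 1) k))
  (* T2 = K (x)_A K : t(r) k (x) k' = k (x) s(r) k' *)
  (T2 : lmodType F) (i2 : K -> K -> T2)
  (tens2 : is_btensor i2 (fun r k => mulK (tK 1 r 1) k)
                         (fun r k => mulK (tK r 1 1) k)) :
  exists (nu : T1 -> T2) (nuinv : T2 -> T1),
    [/\ linear nu /\ linear nuinv,
        (* nu (k (x) k') = k_(1) (x)_A k_(2) k', with the Kadison coproduct *)
        (forall (a b : A) (h : H) (k' : K),
           nu (i1 (tK a b h) k')
           = \sum_(p <- cop HH h) i2 (tK a 1 p.1) (mulK (tK 1 b p.2) k')),
        (forall (a b : A) (h : H) (k' : K),
           nuinv (i2 (tK a b h) k')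
           = \sum_(p <- cop HH h) i1 (tK a 1 p.1) (mulK (tK b 1 (antip HH p.2)) k')),
        cancel nu nuinv & cancel nuinv nu].
Proof.
have [nu [Lnu nuE]] := nu_exists MA tensK mulK_bil mulK_gen tens1 tens2.
have [nuinv [Lnuinv nuinvE]] := nuinv_exists MA tensK mulK_bil mulK_gen tens1 tens2.
exists nu, nuinv; split=> //.
- exact: (nuinv_nu MA tensK mulK_bil mulK_gen tens1 Lnu Lnuinv nuE nuinvE).
- exact: (nu_nuinv MA tensK mulK_bil mulK_gen tens2 Lnu Lnuinv nuE nuinvE).
Qed.
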